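(* Let $U$ be a finite set, $\mathcal{F}$ a multiset (family) of subsets of $U$, and $s,d,t$ nonnegative integers. For $N\subseteq U$ let $\mathcal{F}_N$ be the subfamily of all members of $\mathcal{F}$ equal to $N$ (with multiplicity). Let \[\mathcal{C} = \Big\{\{N_1,\dots,N_b\} : b\le t,\ N_i\subseteq U \ (i\in[b]),\ \textstyle\bigcup_{i=1}^b N_i = U\Big\},\] and for $N\subseteq U$ let $\mathcal{C}_N=\{c\in\mathcal{C}: N\in c\}$. Let $\mathcal{L}$ be the integer linear system in integer variables $x=(x_c: c\in\mathcal{C})$ and $z=(z_N: N\subseteq U)$: \begin{align*} &\textstyle\sum_{c\in\mathcal{C}} x_c\ge d, \qquad \sum_{N\subseteq U} z_N\le s,\\ &\textstyle\sum_{c\in\mathcal{C}_N} x_c \le |\mathcal{F}_N| - z_N \quad\text{for every } N\subseteq U,\\ &0\le z_N\le |\mathcal{F}_N| \quad \text{for every } N\subseteq U,\qquad 0\le x_c\le d\quad\text{for every } c\in\mathcal{C}. \end{align*} Say $\mathcal{L}$ is $z$-resilient if for every integral assignment of $z$ satisfying $\sum_{N\subseteq U} z_N\le s$ and $0\le z_N\le|\mathcal{F}_N|$ for all $N\subseteq U$, there is an integral assignment of $x$ such that all inequalities of $\mathcal{L}$ hold. Then $(U,\mathcal{F},s,d,t)$ is a positive instance of the \textsc{Resiliency Disjoint Set Cover Problem} if and only if $\mathcal{L}$ is $z$-resilient.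
   Context: \textsc{Resiliency Disjoint Set Cover Problem} (RDSCP): given a universe $U$, a multiset $\mathcal{F}$ of subsets of $U$ and integers $s,d,t$, decide whether for every subfamily $\mathcal{S}\subseteq\mathcal{F}$ with $|\mathcal{S}|\le s$ there exist $\mathcal{T}_1,\dots,\mathcal{T}_d\subseteq \mathcal{F}\setminus\mathcal{S}$ such that for all $i,j\in[d]$: $|\mathcal{T}_i|\le t$, $\bigcup_{X\in\mathcal{T}_i}X = U$, and $\mathcal{T}_i\cap\mathcal{T}_j=\emptyset$ for $j\ne i$. Operations on multisets (subfamily, difference, intersection) respect multiplicities. $[p]=\{1,\dots,p\}$. *)

From mathcomp Require Import all_boot all_order all_algebra.
Set Implicit Arguments. Unset Strict Implicit. Unset Printing Implicit Defensive.
Import Order.TTheory GRing.Theory Num.Theory.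

(* The family F is a sequence of subsets of U; its members are identified by
   their positions 'I_(size F), so that multiplicities are respected:
   a subfamily is a set of positions. *)

Definition member (U : finType) (F : seq {set U}) (k : 'I_(size F)) : {set U} :=
  nth set0 F k.

Definition rdscp (U : finType) (F : seq {set U}) (s d t : nat) : Prop :=
  forall S : {set 'I_(size F)}, #|S| <= s ->
  exists T : 'I_d -> {set 'I_(size F)},
    (forall i, [disjoint T i & S]) /\
    (forall i, #|T i| <= t) /\
    (forall i, \bigcup_(k in T i) member k = [set: U]) /\
    (forall i j, i != j -> [disjoint T i & T j]).

Definition multF (U : finType) (F : seq {set U}) (N : {set U}) : nat :=
  count_mem N F.

Definition inC (U : finType) (t : nat) (c : {set {set U}}) : bool :=
  (#|c| <= t) && (\bigcup_(N in c) N == [set: U]).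

Local Open Scope ring_scope.

Definition z_resilient (U : finType) (F : seq {set U}) (s d t : nat) : Prop :=
  forall z : {set U} -> int,
    \sum_(N : {set U}) z N <= s%:Z ->
    (forall N, 0 <= z N <= (multF F N)%:Z) ->
    exists x : {set {set U}} -> int,
      [/\ \sum_(c | inC t c) x c >= d%:Z,
          \sum_(N : {set U}) z N <= s%:Z,
          (forall N : {set U},
              \sum_(c | inC t c && (N \in c)) x c <= (multF F N)%:Z - z N),
          (forall N, 0 <= z N <= (multF F N)%:Z) &
          (forall c, inC t c -> 0 <= x c <= d%:Z)].

From mathcomp Require Import all_boot all_order all_algebra.
Set Implicit Arguments. Unset Strict Implicit. Unset Printing Implicit Defensive.
Import Order.TTheory GRing.Theory Num.Theory.

(* A removal set S corresponds to z_N := #(members of S equal to N), and a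
   system of d disjoint covers to x_c := #(covers whose set of members is c).
   Conversely, from x one lists d covers c_1, ..., c_d with every c used at
   most x_c times; the constraint on N says that at most |F_N| - z_N of them
   contain N, so the r-th cover containing N can be given the r-th surviving
   copy of N, which makes the realised covers pairwise disjoint. *)

Lemma Posz_sum (I : finType) (P : pred I) (g : I -> nat) :
  (\sum_(i | P i) Posz (g i) = Posz (\sum_(i | P i) g i))%R.
Proof. by rewrite (big_morph Posz PoszD (erefl (Posz 0))). Qed.

Section Fibers.

Variables (I J : finType) (f : I -> J).

Lemma sum_card_fibers (P : pred J) :
  \sum_(j | P j) #|[set i | f i == j]| = #|[set i | P (f i)]|.
Proof.
rewrite -sum1dep_card (partition_big f P) //=.
apply: eq_bigr => j Pj; rewrite -sum1dep_card; apply: eq_bigl => i.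
by case: eqP => [->|]; rewrite ?Pj ?andbT ?andbF.
Qed.

Lemma sum_card_fibersI (S : {set I}) :
  \sum_j #|[set i | f i == j] :&: S| = #|S|.
Proof.
rewrite -sum1_card (partition_big f predT) //=.
apply: eq_bigr => j _; rewrite -sum1_card; apply: eq_bigl => i.
by rewrite !inE andbC.
Qed.

Lemma exists_subset_fibers (n : J -> nat) :
  (forall j, n j <= #|[set i | f i == j]|) ->
  exists S : {set I}, forall j, #|[set i | f i == j] :&: S| = n j.
Proof.
move=> n_le; pose B j := [set i in take (n j) (enum [set i | f i == j])].
have fB j i : i \in B j -> f i = j.
  by rewrite inE => /mem_take; rewrite mem_enum inE => /eqP.
exists [set i | i \in B (f i)] => j.
have -> : [set i | f i == j] :&: [set i | i \in B (f i)] = B j.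
  apply/setP => i; rewrite in_setI [i \in [set _ | _]]inE [i \in [set _ | _]]inE.
  by apply/andP/idP => [[/eqP <-] //|iB]; rewrite (fB j i iB) iB.
rewrite cardsE (card_uniqP (take_uniq _ (enum_uniq _))).
by rewrite size_takel // -cardE.
Qed.

End Fibers.

Lemma card_meet_disjoint (I J : finType) (T : I -> {set J}) (A : {set J}) :
  (forall i j, i != j -> [disjoint T i & T j]) ->
  #|[set i | ~~ [disjoint T i & A]]| <= #|A|.
Proof.
move=> disjT; pose rep i := [pick k in T i :&: A].
have repP i : ~~ [disjoint T i & A] -> exists2 k, rep i = Some k & k \in T i :&: A.
  rewrite -setI_eq0 /rep => /set0Pn[k kTA].
  by case: pickP => [k' k'TA | /(_ k)]; [exists k' | rewrite kTA].
rewrite -(card_in_imset (f := rep)); last first.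
  move=> i j; rewrite !inE => /repP[k -> kTA] /repP[k' -> kTA'] [ek'].
  apply/eqP; apply: contraT => /disjT/disjointFr/(_ (setIP kTA).1).
  by rewrite ek' (setIP kTA').1.
rewrite -(card_imset A (@Some_inj _)); apply: subset_leq_card.
apply/subsetP => o /imsetP[i]; rewrite inE => /repP[k -> kTA] ->.
by rewrite imset_f // (setIP kTA).2.
Qed.

Lemma exists_index_enum (K : finType) (B : {set K}) n :
  n < #|B| -> exists2 k, k \in B & index k (enum B) = n.
Proof.
move=> ltn; have /card_gt0P[k0 _] : 0 < #|B| by apply: leq_ltn_trans ltn.
exists (nth k0 (enum B) n); first by rewrite -mem_enum mem_nth // -cardE.
by rewrite index_uniq ?enum_uniq // -cardE.
Qed.

Lemma exists_labelled_matching (I K L : finType) (lab : K -> L)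
    (A : L -> {set I}) (B : L -> {set K}) :
  (forall l, B l \subset [set k | lab k == l]) ->
  (forall l, #|A l| <= #|B l|) ->
  exists T : I -> {set K},
    [/\ forall i k, k \in T i -> k \in B (lab k),
        forall i, {in T i &, injective lab},
        forall i, lab @: T i = [set l | i \in A l] &
        forall i j, i != j -> [disjoint T i & T j]].
Proof.
move=> Blab AB.
have labB l k : k \in B l -> lab k = l.
  by move=> /(subsetP (Blab l)); rewrite inE => /eqP.
pose T i := [set k | [&& k \in B (lab k), i \in A (lab k)
                      & index k (enum (B (lab k))) == index i (enum (A (lab k)))]].
exists T; split.
- by move=> i k; rewrite /T !inE => /and3P[].
- move=> i k k'; rewrite !inE => /and3P[kB _ /eqP ik] /and3P[k'B _ /eqP ik'] lab_kk'.
  rewrite -lab_kk' in k'B ik'.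
  by apply: (index_inj k (s := enum (B (lab k)))); rewrite ?mem_enum // ik ik'.
- move=> i; apply/setP => l; rewrite inE; apply/imsetP/idP => [[k] | iA].
    by rewrite /T !inE => /and3P[_ iA _] ->.
  have [k kB ik] : exists2 k, k \in B l & index k (enum (B l)) = index i (enum (A l)).
    by apply/exists_index_enum/(leq_trans _ (AB l)); rewrite cardE index_mem mem_enum.
  exists k; last by rewrite (labB l k kB).
  by rewrite /T !inE (labB l k kB) kB iA ik eqxx.
- move=> i j ij; apply/pred0P => k /=; rewrite !inE; apply/negP.
  move=> /andP[/and3P[_ iA /eqP ik] /and3P[_ jA /eqP jk]]; move/eqP: ij; apply.
  by apply: (index_inj i (s := enum (A (lab k)))); rewrite ?mem_enum // -ik -jk.
Qed.

Lemma exists_bounded_choice (T : finType) (c0 : T) (P : pred T) (x : T -> nat) d :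
  d <= \sum_(c | P c) x c ->
  exists cover : 'I_d -> T,
    (forall i, P (cover i)) /\ (forall c, #|[set i | cover i == c]| <= x c).
Proof.
move=> d_le; pose cs := flatten [seq nseq (x c) c | c <- enum P].
have count_cs (Q : pred T) : count Q cs = \sum_(c | P c) Q c * x c.
  rewrite count_flatten sumnE !big_map big_enum /=.
  by apply: eq_bigr => c _; rewrite count_nseq mulnC.
have size_cs : d <= size cs.
  by rewrite -count_predT count_cs; under eq_bigr do rewrite mul1n.
exists (nth c0 cs); split => [i | c].
  have : nth c0 cs i \in cs by rewrite mem_nth // (leq_trans (ltn_ord i)).
  case/flatten_mapP=> c'; rewrite mem_enum => Pc'.
  by rewrite mem_nseq => /andP[_ /eqP ->].
have -> : #|[set i : 'I_d | nth c0 cs i == c]| = count (pred1 c) (take d cs).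
  rewrite -sum1_count (big_nth c0) size_takel // big_mkord sum1dep_card.
  by apply: eq_card => i; rewrite !inE nth_take.
apply: (@leq_trans (count (pred1 c) cs)).
  by rewrite -[in X in _ <= X](cat_take_drop d cs) count_cat leq_addr.
rewrite count_cs big_mkcond (bigD1 c) //= big1 ?addn0 => [|c' /negbTE c'c].
  by case: (P c); rewrite ?eqxx ?mul1n.
by case: (P c'); rewrite /= ?c'c.
Qed.

Section Instance.

Variables (U : finType) (F : seq {set U}).

Local Notation member := (@member U F).
Local Notation fiber N := [set k : 'I_(size F) | member k == N].

Lemma card_fiber N : #|fiber N| = multF F N.
Proof.
rewrite -sum1dep_card /multF -sum1_count (big_nth set0) big_mkord.
by apply: eq_bigl => k.
Qed.

Lemma card_fiberD N (S : {set 'I_(size F)}) :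
  (Posz (multF F N) - Posz #|fiber N :&: S| = Posz #|fiber N :\: S|)%R.
Proof. by rewrite -card_fiber -(cardsID S (fiber N)) PoszD addrC addKr. Qed.

Lemma inC_member_imset t (T : {set 'I_(size F)}) :
  #|T| <= t -> \bigcup_(k in T) member k = [set: U] -> inC t (member @: T).
Proof.
move=> Tt Tcov; rewrite /inC (leq_trans (leq_imset_card _ _) Tt) /=.
by rewrite big_imset_idem ?Tcov //; apply: setUid.
Qed.

Lemma rdscp_z_resilient s d t : rdscp F s d t -> z_resilient F s d t.
Proof.
move=> rd z zs zb.
have zE N : z N = `|z N|%N by rewrite gez0_abs //; case/andP: (zb N).
have [S cardS] : exists S : {set 'I_(size F)}, forall N, #|fiber N :&: S| = `|z N|%N.
  by apply: exists_subset_fibers => N; rewrite card_fiber -lez_nat -zE; case/andP: (zb N).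
have Ss : #|S| <= s.
  rewrite -(sum_card_fibersI member S) -lez_nat -Posz_sum.
  by under eq_bigr do rewrite cardS -zE.
have [T [TS [Tt [Tcov Tdisj]]]] := rd S Ss.
pose c i := member @: T i.
have cC i : inC t (c i) := inC_member_imset (Tt i) (Tcov i).
exists (fun C => Posz #|[set i | c i == C]|); split => //.
- rewrite Posz_sum lez_nat sum_card_fibers.
  by rewrite (eq_card (B := 'I_d)) ?card_ord // => i; rewrite inE cC.
- move=> N; rewrite Posz_sum zE -cardS card_fiberD lez_nat sum_card_fibers.
  apply: leq_trans (card_meet_disjoint _ Tdisj); apply: subset_leq_card.
  apply/subsetP => i; rewrite !inE => /andP[_ /imsetP[k kT eN]].
  apply/pred0Pn; exists k; rewrite /= !inE kT -eN eqxx /= andbT.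
  by rewrite (disjointFr (TS i) kT).
- by move=> C _; rewrite lez_nat /= -[X in _ <= X]card_ord max_card.
Qed.

Lemma z_resilient_rdscp s d t : z_resilient F s d t -> rdscp F s d t.
Proof.
move=> zr S Ss.
have zs : (\sum_N Posz #|fiber N :&: S| <= Posz s)%R.
  by rewrite Posz_sum lez_nat sum_card_fibersI.
have zb N : (0 <= Posz #|fiber N :&: S| <= Posz (multF F N))%R.
  by rewrite lez_nat /= -card_fiber subset_leq_card ?subsetIl.
have [x [xd _ xN _ xb]] := zr _ zs zb.
have xE c : inC t c -> x c = `|x c|%N by move/xb/andP => [x0 _]; rewrite gez0_abs.
have [cover [coverC cover_le]] : exists cover : 'I_d -> {set {set U}},
    (forall i, inC t (cover i)) /\ forall c, #|[set i | cover i == c]| <= `|x c|%N.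
  by apply: (exists_bounded_choice set0); move: xd; rewrite (eq_bigr _ xE) Posz_sum lez_nat.
have load N : #|[set i | N \in cover i]| <= #|fiber N :\: S|.
  have -> : [set i | N \in cover i] = [set i | inC t (cover i) && (N \in cover i)].
    by apply/setP => i; rewrite !inE coverC.
  rewrite -(sum_card_fibers cover (fun c => inC t c && (N \in c))) -lez_nat -card_fiberD.
  apply: le_trans (xN N).
  have xE' c : inC t c && (N \in c) -> x c = `|x c|%N by case/andP => /xE.
  by rewrite (eq_bigr _ xE') Posz_sum lez_nat; apply: leq_sum.
have [T [TB Tinj Timg Tdisj]] := exists_labelled_matching
  (fun N => subsetDl (fiber N) S) load.
have Tcover i : member @: T i = cover i by rewrite Timg; apply/setP => N; rewrite !inE.
exists T; split; [|split; [|split]] => // i.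
- apply/pred0P => k /=; apply/negP => /andP[/TB]; rewrite !inE.
  by case/andP=> /negP.
- by rewrite -(card_in_imset (Tinj i)) Tcover; case/andP: (coverC i).
- have /andP[_ /eqP <-] := coverC i.
  by rewrite -Tcover big_imset_idem //; apply: setUid.
Qed.

End Instance.

Theorem lemma1 (U : finType) (F : seq {set U}) (s d t : nat) :
  rdscp F s d t <-> z_resilient F s d t.
Proof. by split; [apply: rdscp_z_resilient | apply: z_resilient_rdscp]. Qed.
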